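(* Let $\mathcal{Y}$ be a family of metric spaces with uniform asymptotic property C. If $\mathcal{X}$ is a family of metric spaces such that $\mathcal{X}$ is uniformly $R$-decomposable over $\mathcal{Y}$ for every sequence $R\in\mathbb{R}^{\mathbb{N}}$ (with the same $\mathcal{Y}$ for all $R$), then $\mathcal{X}$ has uniform asymptotic property C.
   Context: A family $\mathcal{U}$ of metric subspaces of a metric space $(X,d)$ is $r$-disjoint if $d(x,y)>r$ whenever $x\in U$, $y\in U'$ and $U\neq U'$ are elements of $\mathcal{U}$. For families $\mathcal{X},\mathcal{Y}$ of metric spaces and $R=(R_1,R_2,\dots)\in\mathbb{R}^{\mathbb{N}}$, $\mathcal{X}$ is uniformly $R$-decomposable over $\mathcal{Y}$ (written $\mathcal{X}\xrightarrow{R}\mathcal{Y}$) if there is an integer $k$ such that for each $X\in\mathcal{X}$ there exist subcollections $\mathcal{U}_1,\dots,\mathcal{U}_k\subseteq\mathcal{Y}$, consisting of subspaces of $X$ with the induced metric, such that each $\mathcal{U}_i$ is $R_i$-disjoint and $\bigcup_i\mathcal{U}_i$ covers $X$. A family $\mathcal{B}$ of metric spaces is bounded if there is $D>0$ with $\operatorname{diam}(B)<D$ for all $B\in\mathcal{B}$. A family $\mathcal{X}$ has uniform asymptotic property C if for each $R\in\mathbb{R}^{\mathbb{N}}$ there exists a bounded family $\mathcal{Y}_R$ with $\mathcal{X}\xrightarrow{R}\mathcal{Y}_R$. *)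

From HB Require Import structures.
From mathcomp Require Import all_boot all_order all_algebra.
From mathcomp Require Import all_classical all_reals all_analysis.
Set Implicit Arguments. Unset Strict Implicit. Unset Printing Implicit Defensive.
Import Order.TTheory GRing.Theory Num.Theory.
Local Open Scope classical_set_scope.
Local Open Scope ring_scope.

Record metricSpace (R : realType) := MetricSpace {
  carrier :> Type;
  dist : carrier -> carrier -> R;
  dist_ge0 : forall x y, 0 <= dist x y;
  dist_eq0 : forall x y, dist x y = 0 <-> x = y;
  dist_sym : forall x y, dist x y = dist y x;
  dist_triangle : forall x y z, dist x z <= dist x y + dist y z }.

Arguments dist {R} m _ _.

Definition mfamily (R : realType) := metricSpace R -> Prop.

Section Subspace.
Variables (R : realType) (X : metricSpace R) (A : set X).

Definition sub_carrier := {x : X | A x}.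
Definition sub_dist (x y : sub_carrier) : R := dist X (proj1_sig x) (proj1_sig y).

Lemma sub_dist_ge0 x y : 0 <= sub_dist x y.
Proof. exact: dist_ge0. Qed.

Lemma sub_dist_eq0 x y : sub_dist x y = 0 <-> x = y.
Proof.
split; last by move=> ->; apply/dist_eq0.
case: x y => [x Ax] [y Ay] /dist_eq0 /= exy; subst y.
by rewrite (Prop_irrelevance Ax Ay).
Qed.

Lemma sub_dist_sym x y : sub_dist x y = sub_dist y x.
Proof. exact: dist_sym. Qed.

Lemma sub_dist_triangle x y z : sub_dist x z <= sub_dist x y + sub_dist y z.
Proof. exact: dist_triangle. Qed.

Definition subspace : metricSpace R :=
  MetricSpace sub_dist_ge0 sub_dist_eq0 sub_dist_sym sub_dist_triangle.
End Subspace.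

(* diam(B) as an extended real: sup of distances (+oo if unbounded, -oo if empty). *)
Definition diam (R : realType) (B : metricSpace R) : \bar R :=
  ereal_sup [set (dist B x y)%:E | x in [set: B] & y in [set: B]].

Definition r_disjoint (R : realType) (X : metricSpace R) (r : R) (U : set (set X)) :=
  forall A A', U A -> U A' -> A <> A' ->
    forall x y, A x -> A' y -> r < dist X x y.

(* X -R-> Y : uniformly R-decomposable. The sequence R = (R_1, R_2, ...) is
   represented by Rs : nat -> R with R_(i+1) = Rs i (0-based indexing);
   the collections U_1..U_k are indexed by 'I_k. *)
Definition unif_decomposable (R : realType) (XX : mfamily R) (Rs : nat -> R)
    (YY : mfamily R) :=
  exists k : nat, forall X : metricSpace R, XX X ->
    exists U : 'I_k -> set (set X),
      (forall i A, U i A -> YY (subspace A)) /\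
      (forall i : 'I_k, r_disjoint (Rs i) (U i)) /\
      (forall x : X, exists i A, U i A /\ A x).

Definition bounded_family (R : realType) (BB : mfamily R) :=
  exists D : R, 0 < D /\ forall B, BB B -> (diam B < D%:E)%E.

Definition unif_APC (R : realType) (XX : mfamily R) :=
  forall Rs : nat -> R, exists YY : mfamily R,
    bounded_family YY /\ unif_decomposable XX Rs YY.

(* Reserve for each i a block of consecutive indices [M_i, M_i + m_i) of the
   target sequence R, where m_i is the number of collections needed to
   decompose YY with the constants R_(M_i), R_(M_i + 1), ...; since m_i depends
   only on M_i, the blocks can be built recursively for all i at once. Now
   decompose XX over YY with constants S_i := sum of |R_l| over the first i+1
   blocks, using k collections, and split every piece of the i-th collection
   with the i-th block. Gathering the j-th subpieces coming from the i-th
   collection into collection M_i + j gives R_(M_i + j)-disjoint families: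
   subpieces of one piece are separated by the inner decomposition, subpieces
   of different pieces by S_i >= R_(M_i + j). Only k bounds are involved, so
   the result is uniformly bounded. *)

From mathcomp Require Import all_boot all_order all_algebra.
From mathcomp Require Import all_classical all_reals all_analysis.
(* Imported last so that [subspace] is the metric subspace of Defs rather
   than the topological one of all_analysis. *)
From Pilot Require Import Defs.
Import Order.TTheory GRing.Theory Num.Theory.
Local Open Scope classical_set_scope.
Local Open Scope ring_scope.

Section Blocks.
Variable blen : nat -> nat.

Fixpoint block_start (i : nat) : nat :=
  if i is i'.+1 then (block_start i' + blen (block_start i'))%N else 0%N.

Definition block_len (i : nat) : nat := blen (block_start i).

Lemma block_startS i : block_start i.+1 = (block_start i + block_len i)%N.
Proof. by []. Qed.

Lemma leq_block_start {a b} : (a <= b)%N -> (block_start a <= block_start b)%N.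
Proof.
by apply: (homo_leq leqnn leq_trans) => i; rewrite leq_addr.
Qed.

Lemma block_start_lt {i j a} :
  (j < block_len i)%N -> (i < a)%N -> (block_start i + j < block_start a)%N.
Proof.
move=> ji ia; apply: leq_trans _ (leq_block_start ia).
by rewrite block_startS ltn_add2l.
Qed.

Lemma block_start_inj i i' j j' :
  (j < block_len i)%N -> (j' < block_len i')%N ->
  (block_start i + j = block_start i' + j')%N -> i = i'.
Proof.
move=> ji ji' E; case: (ltngtP i i') => // [lt | lt].
- by have := block_start_lt ji lt; rewrite E ltnNge leq_addr.
- by have := block_start_lt ji' lt; rewrite -E ltnNge leq_addr.
Qed.

End Blocks.

Arguments block_start_lt {blen i j a}.
Arguments block_start_inj {blen i i' j j'}.

Section Decompositions.
Context {R : realType}.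

Lemma ler_sum_norm_term (f : nat -> R) {n N : nat} :
  (n < N)%N -> f n <= \sum_(l < N) `|f l|.
Proof.
move=> nN; apply: le_trans (ler_norm _) _.
by rewrite (bigD1 (Ordinal nN)) //= lerDl sumr_ge0.
Qed.

Lemma diam_subspace_isometry_image (X Y : metricSpace R) (f : X -> Y)
    (A : set X) :
  (forall x y, dist Y (f x) (f y) = dist X x y) ->
  diam (subspace (f @` A)) = diam (subspace A).
Proof.
move=> f_iso; congr ereal_sup; apply/seteqP; split=> z.
- move=> [[fx' [x Ax fx]] _ [[fy' [y Ay fy]] _ <-]].
  exists (exist _ x Ax) => //; exists (exist _ y Ay) => //.
  by rewrite /= /sub_dist /= -fx -fy f_iso.
- move=> [[x Ax] _ [[y Ay] _ <-]].
  have fAx : (f @` A) (f x) by exists x.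
  have fAy : (f @` A) (f y) by exists y.
  exists (exist _ _ fAx) => //; exists (exist _ _ fAy) => //.
  by rewrite /= /sub_dist /= f_iso.
Qed.

Definition sub_val {X : metricSpace R} {A : set X} (v : subspace A) : X :=
  proj1_sig v.

Definition diam_lt (D : R) : mfamily R := fun B => (diam B < D%:E)%E.

Lemma diam_lt_le (D D' : R) B : D <= D' -> diam_lt D B -> diam_lt D' B.
Proof. by move=> DD' /lt_le_trans; apply; rewrite lee_fin. Qed.

Definition is_decomposition (X : metricSpace R) k (Rs : nat -> R)
    (YY : mfamily R) (U : 'I_k -> set (set X)) :=
  (forall i A, U i A -> YY (subspace A)) /\
  (forall i : 'I_k, r_disjoint (Rs i) (U i)) /\
  (forall x : X, exists i A, U i A /\ A x).

Arguments is_decomposition {X k}.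

Definition unif_decomposable_with k (XX : mfamily R) (Rs : nat -> R)
    (YY : mfamily R) :=
  forall X, XX X -> exists U : 'I_k -> set (set X), is_decomposition Rs YY U.

Lemma unif_decomposable_with_sub {k XX Rs} {YY YY' : mfamily R} :
  (forall B, YY B -> YY' B) ->
  unif_decomposable_with k XX Rs YY -> unif_decomposable_with k XX Rs YY'.
Proof.
move=> subYY XY X XXX; have [U [UY [Udisj Ucov]]] := XY X XXX.
by exists U; split=> [i A /UY/subYY|].
Qed.

Lemma unif_APC_decomposable {YY : mfamily R} : unif_APC YY ->
  exists (m : (nat -> R) -> nat) (D : (nat -> R) -> R),
    forall T, unif_decomposable_with (m T) YY T (diam_lt (D T)).
Proof.
move=> YC.
have /choice [mD YmD] : forall T, exists mD : nat * R,
    unif_decomposable_with mD.1 YY T (diam_lt mD.2).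
  move=> T; have [ZZ [[D [_ ZD]] [m YZ]]] := YC T.
  by exists (m, D); apply: unif_decomposable_with_sub YZ.
by exists (fun T => (mD T).1), (fun T => (mD T).2).
Qed.

Section Composition.
Context {X : metricSpace R} {YY : mfamily R} {Rs S : nat -> R} {D : R}.
Context {blen : nat -> nat} {k : nat}.
Local Notation M := (block_start blen).
Local Notation T i := (fun j => Rs (M i + j)%N).

Context {U : 'I_k -> set (set X)} (U_dec : is_decomposition S YY U).
Context {V : forall (i : 'I_k) (A : set X),
  'I_(block_len blen i) -> set (set (subspace A))}.
Context (V_dec : forall i A, U i A -> is_decomposition (T i) (diam_lt D) (V i A)).
Context (Rs_le_S : forall i j, (j < block_len blen i)%N -> Rs (M i + j) <= S i).

Definition composed_pieces (n : nat) : set (set X) :=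
  [set B | exists (i : 'I_k) (j : 'I_(block_len blen i)) (A : set X)
      (W : set (subspace A)),
    [/\ (M i + j)%N = n, U i A, V i A j W & B = sub_val @` W]].

Lemma composed_pieces_bounded n B : composed_pieces n B -> diam_lt D (subspace B).
Proof.
move=> [i [j [A [W [_ UiA VW ->]]]]].
rewrite /diam_lt diam_subspace_isometry_image //.
by have [VD _] := V_dec _ _ UiA; exact: VD VW.
Qed.

Lemma composed_pieces_disjoint n : r_disjoint (Rs n) (composed_pieces n).
Proof.
move=> B B' [i [j [A [W [En UiA VW ->]]]]] [i' [j' [A' [W' [En' UiA' VW' ->]]]]].
move=> BB' _ _ [v Wv <-] [w W'w <-].
have ii' : i = i'.
  by apply/val_inj/(block_start_inj (ltn_ord j) (ltn_ord j')); rewrite En En'.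
subst i'; have jj' : j = j' by apply/val_inj/(@addnI (M i)); rewrite En En'.
subst j' n; have [AA' | AA'] := pselect (A = A').
- subst A'; have WW' : W <> W' by move=> WW'; apply: BB'; rewrite WW'.
  by have [_ [Vdisj _]] := V_dec _ _ UiA; exact: Vdisj VW VW' WW' v w Wv W'w.
- have [_ [Udisj _]] := U_dec.
  apply: le_lt_trans (Rs_le_S i j (ltn_ord j)) _.
  exact: Udisj UiA UiA' AA' _ _ (proj2_sig v) (proj2_sig w).
Qed.

Lemma composed_pieces_cover x : exists (n : 'I_(M k)) B, composed_pieces n B /\ B x.
Proof.
have [_ [_ Ucov]] := U_dec; have [i [A [UiA Ax]]] := Ucov x.
have [_ [_ Vcov]] := V_dec _ _ UiA; have [j [W [VW Wx]]] := Vcov (exist _ x Ax).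
exists (Ordinal (block_start_lt (ltn_ord j) (ltn_ord i))), (sub_val @` W).
by split; [exists i, j, A, W | exists (exist _ x Ax)].
Qed.

Lemma is_decomposition_comp :
  is_decomposition Rs (diam_lt D) (fun n : 'I_(M k) => composed_pieces n).
Proof.
split; [exact: composed_pieces_bounded | split=> [n|]].
- exact: composed_pieces_disjoint.
- exact: composed_pieces_cover.
Qed.

End Composition.

Lemma unif_decomposable_comp {XX YY : mfamily R} {Rs S : nat -> R} {D : R}
    {blen : nat -> nat} {k : nat} :
  unif_decomposable_with k XX S YY ->
  (forall i, (i < k)%N -> unif_decomposable_with (block_len blen i) YY
     (fun j => Rs (block_start blen i + j)%N) (diam_lt D)) ->
  (forall i j, (j < block_len blen i)%N -> Rs (block_start blen i + j) <= S i) ->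
  unif_decomposable_with (block_start blen k) XX Rs (diam_lt D).
Proof.
move=> XY YD Rs_le_S X XXX; have [U U_dec] := XY X XXX.
have V_ex (i : 'I_k) (A : set X) :
    exists V : 'I_(block_len blen i) -> set (set (subspace A)), U i A ->
    is_decomposition (fun j => Rs (block_start blen i + j)%N) (diam_lt D) V.
  have [UiA | nUiA] := pselect (U i A); last by exists (fun=> set0) => /nUiA.
  have [UY _] := U_dec.
  by have [V V_dec] := YD i (ltn_ord i) _ (UY i A UiA); exists V.
eexists; apply: (is_decomposition_comp U_dec _ Rs_le_S) => i A.
exact: proj2_sig (cid (V_ex i A)).
Qed.

End Decompositions.

Theorem theorem1p5 (R : realType) (YY XX : mfamily R) :
  unif_APC YY ->
  (forall Rs : nat -> R, unif_decomposable XX Rs YY) ->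
  unif_APC XX.
Proof.
move=> YC XY Rs.
have [m [D YmD]] := unif_APC_decomposable YC.
pose blen s := m (fun j => Rs (s + j)%N).
pose T i j := Rs (block_start blen i + j)%N.
pose S i := \sum_(l < block_start blen i.+1) `|Rs l|.
have [k XSY] : exists k, unif_decomposable_with k XX S YY := XY S.
pose Dk := \sum_(i < k) `|D (T i)| + 1.
exists (diam_lt Dk); split.
  by exists Dk; rewrite ltr_pwDr // sumr_ge0.
exists (block_start blen k); apply: (unif_decomposable_comp XSY) => [i ik|i j ji].
- apply: unif_decomposable_with_sub (YmD (T i)) => B; apply: diam_lt_le.
  apply: le_trans (ler_sum_norm_term (fun l => D (T l)) ik) _.
  by rewrite /Dk lerDl.
- by apply: (ler_sum_norm_term Rs); rewrite block_startS ltn_add2l.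
Qed.
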